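(* Let $A,Q\in\mathbb{R}^{n\times n}$, $B,L\in\mathbb{R}^{n\times m}$, $R\in\mathbb{R}^{m\times m}$, and $A_0^i\in\mathbb{R}^{n\times n}$, $B_0^i\in\mathbb{R}^{n\times m}$ for $i=1,\dots,r$, such that $R\succ 0$ and $\begin{bmatrix} Q & L\\ L^{\mathsf T} & R\end{bmatrix}\succeq 0$ (symmetric positive semidefinite). Suppose that $$\mathcal N(Q-LR^{-1}L^{\mathsf T})\subseteq \mathcal N(L^{\mathsf T})\cap\bigcap_{i=1}^r\mathcal N(A_0^i).$$ If $(Q-LR^{-1}L^{\mathsf T},A)$ is detectable, then for every symmetric positive semidefinite $\widetilde X\in\mathbb{R}^{n\times n}$ the pair $\big(H_{\mathrm c}(\widetilde X),A_{\mathrm c}(\widetilde X)\big)$ is detectable and $H_{\mathrm c}(\widetilde X)\succeq 0$.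
   Context: $\mathcal N(\cdot)$ denotes the null space. For symmetric $X\in\mathbb{R}^{n\times n}$ define $\Pi_{11}(X)=\sum_{i=1}^r (A_0^i)^{\mathsf T}XA_0^i$, $\Pi_{12}(X)=\sum_{i=1}^r (A_0^i)^{\mathsf T}XB_0^i$, $\Pi_{22}(X)=\sum_{i=1}^r (B_0^i)^{\mathsf T}XB_0^i$, $L_{\mathrm c}(X)=L+\Pi_{12}(X)$, $R_{\mathrm c}(X)=R+\Pi_{22}(X)$, $Q_{\mathrm c}(X)=Q+\Pi_{11}(X)$, $A_{\mathrm c}(X)=A-B[R_{\mathrm c}(X)]^{-1}[L_{\mathrm c}(X)]^{\mathsf T}$, $H_{\mathrm c}(X)=Q_{\mathrm c}(X)-L_{\mathrm c}(X)[R_{\mathrm c}(X)]^{-1}[L_{\mathrm c}(X)]^{\mathsf T}$. A pair $(H,A)$ of $n\times n$ matrices is detectable if there is no nonzero $z\in\mathbb{C}^n$ and $\lambda\in\mathbb{C}$ with $\mathrm{Re}(\lambda)\ge0$ such that $(A-\lambda I)z=0$ and $Hz=0$. *)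

From HB Require Import structures.
From mathcomp Require Import all_boot all_order all_algebra.
From mathcomp Require Import reals.
From mathcomp Require Import complex.
Set Implicit Arguments. Unset Strict Implicit. Unset Printing Implicit Defensive.
Import Order.TTheory GRing.Theory Num.Theory.
Local Open Scope ring_scope.

Section Defs.
Variable R : realType.

Definition symmx n (X : 'M[R]_n) : Prop := X^T = X.

Definition psdmx n (X : 'M[R]_n) : Prop :=
  symmx X /\ forall x : 'cV[R]_n, 0 <= (x^T *m X *m x) 0 0.

Definition pdmx n (X : 'M[R]_n) : Prop :=
  symmx X /\ forall x : 'cV[R]_n, x != 0 -> 0 < (x^T *m X *m x) 0 0.

Definition nullsp p q (M : 'M[R]_(p, q)) : 'cV[R]_q -> Prop :=
  fun x => M *m x = 0.

Definition cplx_mx p q (M : 'M[R]_(p, q)) : 'M[R[i]]_(p, q) :=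
  map_mx (fun a => a%:C%C) M.

Definition detectable n (H A : 'M[R]_n) : Prop :=
  ~ exists (z : 'cV[R[i]]_n) (lam : R[i]),
      [/\ z != 0, 0 <= complex.Re lam,
          (cplx_mx A - lam%:M) *m z = 0 & cplx_mx H *m z = 0].

Variables (n m r : nat).
Variables (A Q : 'M[R]_n) (B L : 'M[R]_(n, m)) (Rm : 'M[R]_m)
          (A0 : 'I_r -> 'M[R]_n) (B0 : 'I_r -> 'M[R]_(n, m)).

Definition Pi11 (X : 'M[R]_n) : 'M[R]_n := \sum_(i < r) (A0 i)^T *m X *m A0 i.
Definition Pi12 (X : 'M[R]_n) : 'M[R]_(n, m) := \sum_(i < r) (A0 i)^T *m X *m B0 i.
Definition Pi22 (X : 'M[R]_n) : 'M[R]_m := \sum_(i < r) (B0 i)^T *m X *m B0 i.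
Definition Lc X := L + Pi12 X.
Definition Rc X := Rm + Pi22 X.
Definition Qc X := Q + Pi11 X.
Definition Ac X := A - B *m invmx (Rc X) *m (Lc X)^T.
Definition Hc X := Qc X - Lc X *m invmx (Rc X) *m (Lc X)^T.

End Defs.

From HB Require Import structures.
From mathcomp Require Import all_boot all_order all_algebra.
From mathcomp Require Import reals.
From mathcomp Require Import complex.
From mathcomp Require Import ring lra.
Set Implicit Arguments. Unset Strict Implicit. Unset Printing Implicit Defensive.
Import Order.TTheory GRing.Theory Num.Theory.
Local Open Scope ring_scope.

(* With M(X) the block matrix [[Qc X, Lc X], [(Lc X)^T, Rc X]], Hc X is the
   Schur complement of Rc X in M(X), and M(X) = M(0) + sum_i C_i^T X C_i with
   C_i = [A0 i, B0 i].  Completing the square shows that x^T S x, for S the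
   Schur complement, is the minimum over u of the form of the block matrix at
   (x, u); so Schur complements of psd blocks are psd and monotone in the
   block, giving 0 <= x^T H0 x <= x^T Hc(X) x with H0 = Q - L Rm^-1 L^T.
   Hence Hc(X) y = 0 forces H0 y = 0, so L^T y = 0 and A0 i y = 0 by
   hypothesis, so (Lc X)^T y = 0 and Ac(X) y = A y: an undetectable mode of
   (Hc(X), Ac(X)) would be one of (H0, A). *)

Section QuadraticForms.
Variable R : realType.

Definition qform k (P : 'M[R]_k) (x : 'cV[R]_k) : R := (x^T *m P *m x) 0 0.

Definition schur p k (Q : 'M[R]_p) (K : 'M[R]_(p, k)) (S : 'M[R]_k) : 'M[R]_p :=
  Q - K *m invmx S *m K^T.

Lemma qformD k (P P' : 'M[R]_k) x : qform (P + P') x = qform P x + qform P' x.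
Proof. by rewrite /qform mulmxDr mulmxDl mxE. Qed.

Lemma qform_congr k l (P : 'M[R]_k) (C : 'M[R]_(k, l)) x :
  qform (C^T *m P *m C) x = qform P (C *m x).
Proof. by rewrite /qform trmx_mul !mulmxA. Qed.

Lemma psdmx0 k : psdmx (0 : 'M[R]_k).
Proof. by split=> [|x]; rewrite /symmx ?trmx0 // mulmx0 mul0mx mxE. Qed.

Lemma psdmxD k (P P' : 'M[R]_k) : psdmx P -> psdmx P' -> psdmx (P + P').
Proof.
move=> [sP hP] [sP' hP']; split=> [|x]; first by rewrite /symmx linearD /= sP sP'.
by rewrite -/(qform _ x) qformD; exact: addr_ge0 (hP x) (hP' x).
Qed.

Lemma psdmx_sum k I (s : seq I) (F : I -> 'M[R]_k) :
  (forall i, psdmx (F i)) -> psdmx (\sum_(i <- s) F i).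
Proof. by move=> psdF; apply: big_ind => //; [exact: psdmx0 | exact: psdmxD]. Qed.

Lemma psdmx_congr k l (P : 'M[R]_k) (C : 'M[R]_(k, l)) :
  psdmx P -> psdmx (C^T *m P *m C).
Proof.
move=> [sP hP]; split=> [|x]; first by rewrite /symmx !trmx_mul trmxK sP mulmxA.
by rewrite -/(qform _ x) qform_congr; exact: hP.
Qed.

Lemma pdmx_unit k (S : 'M[R]_k) : pdmx S -> S \in unitmx.
Proof.
move=> [_ hS]; rewrite unitmxE unitfE; apply/negP => /det0P [v v0 vS].
by have := hS v^T; rewrite trmx_eq0 trmxK vS mul0mx mxE ltxx => /(_ v0).
Qed.

Lemma pdmxD k (P P' : 'M[R]_k) : pdmx P -> psdmx P' -> pdmx (P + P').
Proof.
move=> [sP hP] [sP' hP']; split=> [|x x0]; first by rewrite /symmx linearD /= sP sP'.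
by rewrite -/(qform _ x) qformD; exact: ltr_wpDr (hP' x) (hP x x0).
Qed.

Lemma ge0_linear_quadratic (a b : R) :
  0 <= b -> (forall t, 0 <= t * a + t ^+ 2 * b) -> a = 0.
Proof.
move=> b0 h; have b1 : 0 < b + 1 by lra.
have := h (- a / (b + 1)).
have -> : - a / (b + 1) * a + (- a / (b + 1)) ^+ 2 * b = - (a / (b + 1)) ^+ 2.
  by field; lra.
rewrite oppr_ge0 => le0.
have : (a / (b + 1)) ^+ 2 == 0 by rewrite eq_le le0 sqr_ge0.
by rewrite sqrf_eq0 mulf_eq0 invr_eq0 => /orP[/eqP //|]; lra.
Qed.

Lemma trmx_mul_self_eq0 k (y : 'cV[R]_k) : (y^T *m y) 0 0 = 0 -> y = 0.
Proof.
rewrite mxE => /eqP; rewrite psumr_eq0 => [/allP y0|i _]; last first.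
  by rewrite mxE -expr2 sqr_ge0.
apply/matrixP => i j; rewrite (ord1 j) [RHS]mxE.
by have := y0 i (mem_index_enum _); rewrite mxE -expr2 sqrf_eq0 => /eqP.
Qed.

Lemma psdmx_qform_eq0 k (P : 'M[R]_k) x : psdmx P -> qform P x = 0 -> P *m x = 0.
Proof.
move=> [sP hP] Px0; set y := P *m x.
have cross : \tr (x^T *m P *m y) = \tr (y^T *m y).
  by rewrite -mxtrace_tr !trmx_mul trmxK sP -!mulmxA.
(* x minimizes the form, so its first variation 2 (P x)^T P x must vanish. *)
have expand t : qform P (x + t *: y) = t * (2 * (y^T *m y) 0 0) + t ^+ 2 * qform P y.
  rewrite /qform; have -> : (x + t *: y)^T = x^T + t *: y^T by rewrite linearD linearZ.
  rewrite !(mulmxDl, mulmxDr) -!scalemxAl -!scalemxAr.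
  rewrite -!trace_mx11 !raddfD /= !mxtraceZ cross -[y^T *m P *m x]mulmxA.
  by rewrite -/y trace_mx11 [(x^T *m P *m x) 0 0]Px0 expr2; ring.
have /eqP : 2 * (y^T *m y) 0 0 = 0.
  by apply: (ge0_linear_quadratic (hP y)) => t; rewrite -expand; exact: hP.
by rewrite mulf_eq0 pnatr_eq0 => /eqP /trmx_mul_self_eq0.
Qed.

Lemma qform_block_schur p k (Q : 'M[R]_p) (K : 'M[R]_(p, k)) (S : 'M[R]_k)
    (x : 'cV[R]_p) (u : 'cV[R]_k) :
  symmx S -> S \in unitmx ->
  qform (block_mx Q K K^T S) (col_mx x u) =
  qform (schur Q K S) x + qform S (u + invmx S *m K^T *m x).
Proof.
move=> sS uS; rewrite /qform /schur.
have -> : (u + invmx S *m K^T *m x)^T = u^T + x^T *m K *m invmx S.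
  by rewrite linearD /= !trmx_mul trmxK trmx_inv sS mulmxA.
rewrite tr_col_mx mul_row_block mul_row_col.
rewrite !(mulmxDl, mulmxDr, mulmxN, mulNmx) !mulmxA !mulmxK // !mulmxKV //.
by rewrite -!trace_mx11 !(raddfD, raddfN) /=; ring.
Qed.

Lemma qform_block_schur_min p k (Q : 'M[R]_p) (K : 'M[R]_(p, k)) (S : 'M[R]_k)
    (x : 'cV[R]_p) :
  symmx S -> S \in unitmx ->
  qform (block_mx Q K K^T S) (col_mx x (- (invmx S *m K^T *m x))) =
  qform (schur Q K S) x.
Proof.
move=> sS uS; rewrite qform_block_schur // addNr /qform trmx0 !mul0mx.
by rewrite [X in _ + X]mxE addr0.
Qed.

Lemma schur_le_qform_block p k (Q : 'M[R]_p) (K : 'M[R]_(p, k)) (S : 'M[R]_k)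
    (x : 'cV[R]_p) (u : 'cV[R]_k) :
  pdmx S -> qform (schur Q K S) x <= qform (block_mx Q K K^T S) (col_mx x u).
Proof.
move=> pdS; rewrite qform_block_schur ?pdmx_unit //; last exact: pdS.1.
rewrite lerDl; set v := _ + _; have [->|v0] := eqVneq v 0.
  by rewrite /qform trmx0 !mul0mx mxE.
exact/ltW/pdS.2.
Qed.

Lemma psdmx_schur p k (Q : 'M[R]_p) (K : 'M[R]_(p, k)) (S : 'M[R]_k) :
  pdmx S -> psdmx (block_mx Q K K^T S) -> psdmx (schur Q K S).
Proof.
move=> pdS [sM hM]; move: sM; rewrite /symmx tr_block_mx trmxK.
move=> /eq_block_mx [sQ _ _ sS]; split=> [|x].
  by rewrite /symmx /schur linearB /= !trmx_mul trmxK trmx_inv sS sQ mulmxA.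
rewrite -/(qform _ x) -qform_block_schur_min ?pdmx_unit //; exact: hM.
Qed.

Lemma schur_qform_le p k (Q1 Q2 : 'M[R]_p) (K1 K2 : 'M[R]_(p, k)) (S1 S2 : 'M[R]_k) x :
  pdmx S1 -> pdmx S2 ->
  (forall v, qform (block_mx Q1 K1 K1^T S1) v <= qform (block_mx Q2 K2 K2^T S2) v) ->
  qform (schur Q1 K1 S1) x <= qform (schur Q2 K2 S2) x.
Proof.
move=> pdS1 pdS2 le12.
rewrite -(qform_block_schur_min Q2 K2 x pdS2.1 (pdmx_unit pdS2)).
exact: le_trans (schur_le_qform_block _ _ _ _ pdS1) (le12 _).
Qed.

Lemma summx_block I (s : seq I) (P : pred I) m1 m2 n1 n2
    (a : I -> 'M[R]_(m1, n1)) (b : I -> 'M[R]_(m1, n2))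
    (c : I -> 'M[R]_(m2, n1)) (d : I -> 'M[R]_(m2, n2)) :
  \sum_(i <- s | P i) block_mx (a i) (b i) (c i) (d i) =
  block_mx (\sum_(i <- s | P i) a i) (\sum_(i <- s | P i) b i)
           (\sum_(i <- s | P i) c i) (\sum_(i <- s | P i) d i).
Proof.
rewrite -[LHS]submxK /ulsubmx /ursubmx /dlsubmx /drsubmx !raddf_sum.
by congr (block_mx _ _ _ _); apply: eq_bigr => i _;
  rewrite /= ?col_mxKu ?col_mxKd ?row_mxKl ?row_mxKr.
Qed.

End QuadraticForms.

Section Complexification.
Variable R : realType.

Lemma Re_cplx_mx_mul p q (M : 'M[R]_(p, q)) (z : 'cV[R[i]]_q) :
  map_mx (@complex.Re R) (cplx_mx M *m z) = M *m map_mx (@complex.Re R) z.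
Proof.
apply/matrixP => i j; rewrite !mxE (raddf_sum (@complex.Re R : Rcomplex R -> R)).
by apply: eq_bigr => l _; rewrite !mxE; case: (z l j) => a b /=; rewrite mul0r subr0.
Qed.

Lemma Im_cplx_mx_mul p q (M : 'M[R]_(p, q)) (z : 'cV[R[i]]_q) :
  map_mx (@complex.Im R) (cplx_mx M *m z) = M *m map_mx (@complex.Im R) z.
Proof.
apply/matrixP => i j; rewrite !mxE (raddf_sum (@complex.Im R : Rcomplex R -> R)).
by apply: eq_bigr => l _; rewrite !mxE; case: (z l j) => a b /=; rewrite mul0r addr0.
Qed.

Lemma cplx_mx_mul_eq0 p q (M : 'M[R]_(p, q)) (z : 'cV[R[i]]_q) :
  cplx_mx M *m z = 0 <->
  M *m map_mx (@complex.Re R) z = 0 /\ M *m map_mx (@complex.Im R) z = 0.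
Proof.
rewrite -Re_cplx_mx_mul -Im_cplx_mx_mul; split=> [->|[+ +]].
  by split; apply/matrixP => i j; rewrite !mxE.
move=> /matrixP Re0 /matrixP Im0; apply/matrixP => i j.
move: (Re0 i j) (Im0 i j); rewrite !mxE => Re_ij Im_ij.
by rewrite [LHS]complexE Re_ij Im_ij mulr0 addr0.
Qed.

Lemma detectable_kernel_transfer n (H A H' A' : 'M[R]_n) :
  detectable H A ->
  (forall y : 'cV[R]_n, H' *m y = 0 -> H *m y = 0 /\ A' *m y = A *m y) ->
  detectable H' A'.
Proof.
move=> detHA ker [z [lam [z0 Relam A'z H'z]]]; apply: detHA; exists z, lam.
move/cplx_mx_mul_eq0: H'z => [/ker[Hre Are] /ker[Him Aim]].
have /eqP : cplx_mx (A' - A) *m z = 0.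
  by apply/cplx_mx_mul_eq0; rewrite !mulmxBl Are Aim !subrr.
rewrite /cplx_mx map_mxB mulmxBl subr_eq0 => /eqP Az.
split=> //; last exact/cplx_mx_mul_eq0.
by rewrite mulmxBl -Az -mulmxBl.
Qed.

End Complexification.

Section GeneralizedRiccati.
Variables (R : realType) (n m r : nat).
Variables (Q : 'M[R]_n) (L : 'M[R]_(n, m)) (Rm : 'M[R]_m).
Variables (A0 : 'I_r -> 'M[R]_n) (B0 : 'I_r -> 'M[R]_(n, m)) (X : 'M[R]_n).
Hypothesis symX : symmx X.

Lemma trmx_Lc : (Lc L A0 B0 X)^T = L^T + \sum_i (B0 i)^T *m X *m A0 i.
Proof.
rewrite /Lc /Pi12 linearD raddf_sum /=; congr (_ + _); apply: eq_bigr => i _.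
by rewrite !trmx_mul trmxK symX mulmxA.
Qed.

Lemma block_mx_QcLcRc :
  block_mx (Qc Q A0 X) (Lc L A0 B0 X) (Lc L A0 B0 X)^T (Rc Rm B0 X) =
  block_mx Q L L^T Rm +
  \sum_i (row_mx (A0 i) (B0 i))^T *m X *m row_mx (A0 i) (B0 i).
Proof.
under eq_bigr => i _ do rewrite tr_row_mx mul_col_mx mul_col_row.
by rewrite summx_block add_block_mx trmx_Lc.
Qed.

End GeneralizedRiccati.

Theorem lemma2p2 (R : realType) (n m r : nat)
  (A Q : 'M[R]_n) (B L : 'M[R]_(n, m)) (Rm : 'M[R]_m)
  (A0 : 'I_r -> 'M[R]_n) (B0 : 'I_r -> 'M[R]_(n, m)) :
  pdmx Rm ->
  psdmx (block_mx Q L L^T Rm) ->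
  (forall x : 'cV[R]_n, nullsp (Q - L *m invmx Rm *m L^T) x ->
     nullsp L^T x /\ forall i : 'I_r, nullsp (A0 i) x) ->
  detectable (Q - L *m invmx Rm *m L^T) A ->
  forall Xt : 'M[R]_n, psdmx Xt ->
    detectable (Hc Q L Rm A0 B0 Xt) (Ac A B L Rm A0 B0 Xt) /\
    psdmx (Hc Q L Rm A0 B0 Xt).
Proof.
move=> pdR psdM ker_H0 detH0 X psdX; have symX := psdX.1.
have psdPi : psdmx (\sum_i (row_mx (A0 i) (B0 i))^T *m X *m row_mx (A0 i) (B0 i)).
  by apply: psdmx_sum => i; exact: psdmx_congr.
have pdRc : pdmx (Rc Rm B0 X).
  by apply: pdmxD => //; apply: psdmx_sum => i; exact: psdmx_congr.
have psdH0 := psdmx_schur pdR psdM.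
have psdHc : psdmx (Hc Q L Rm A0 B0 X).
  by apply: psdmx_schur pdRc _; rewrite block_mx_QcLcRc //; exact: psdmxD.
have H0_le_Hc y : qform (schur Q L Rm) y <= qform (Hc Q L Rm A0 B0 X) y.
  apply: schur_qform_le pdR pdRc _ => v.
  by rewrite block_mx_QcLcRc // qformD lerDl; exact: psdPi.2.
split=> //; apply: detectable_kernel_transfer detH0 _ => y Hcy.
have H0y : schur Q L Rm *m y = 0.
  apply: (psdmx_qform_eq0 psdH0); apply/le_anti; rewrite (psdH0.2 y) andbT.
  by apply: le_trans (H0_le_Hc y) _; rewrite /qform -mulmxA Hcy mulmx0 mxE.
have [Ly A0y] := ker_H0 y H0y.
split=> //; rewrite /Ac mulmxBl trmx_Lc // -!mulmxA mulmxDl Ly add0r mulmx_suml.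
by rewrite big1 ?mulmx0 ?subr0 // => i _; rewrite -!mulmxA (A0y i) !mulmx0.
Qed.
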